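(* Let $m\geq 3$ and $n\in \mathbb{N}$. Then \[ \sigma'_m(n) =\sum_{k=0}^\infty (-1)^{k+1} \big( P_{m+2,k} \cdot p'_m(n-P_{m+2,k})+ Q_{m+2,k} \cdot p'_m(n-Q_{m+2,k})\big), \] where $P_{m+2,k}=\frac{k(mk-(m-2))}{2}$ and $Q_{m+2,k}=\frac{k(mk+(m-2))}{2}$.
   Context: For $m\ge3$ and $n\in\mathbb{N}$, $\sigma'_m(n)$ is the sum of the positive divisors $d$ of $n$ with $d\equiv 0$, $1$ or $m-1 \pmod m$. $p'_m(n)$ is the number of partitions of $n$ in which every part is congruent to $0$, $1$ or $m-1$ modulo $m$, with $p'_m(0)=1$ and $p'_m(x)=0$ for $x\notin\mathbb{N}_0$. *)

From mathcomp Require Import all_boot all_order all_algebra.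
Set Implicit Arguments. Unset Strict Implicit. Unset Printing Implicit Defensive.
Import Order.TTheory GRing.Theory Num.Theory.

Definition good_res (m d : nat) : bool :=
  [|| d %% m == 0, d %% m == 1 | d %% m == m.-1].

Definition sigmap (m n : nat) : nat :=
  \sum_(d <- divisors n | good_res m d) d.

(* Partitions of n encoded by multiplicity functions: f i = number of parts
   equal to i (parts are at most n, multiplicities at most n).
   f is a partition of n with all parts good iff 0 is not a part, every part
   is good, and \sum_i i * f i = n.  This is a bijection with the
   (multisets of parts) partitions of n. *)
Definition good_partition (m n : nat) (f : {ffun 'I_n.+1 -> 'I_n.+1}) : bool :=
  [forall i : 'I_n.+1, (f i != ord0) ==> ((0 < i) && good_res m i)]
  && (\sum_(i < n.+1) (i * f i) == n).

Definition ppart_nat (m n : nat) : nat := #|[pred f : {ffun 'I_n.+1 -> 'I_n.+1} | @good_partition m n f]|.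

(* p'_m(x) on integers, 0 outside N_0 (p'_m(0) = 1 automatically). *)
Definition ppart (m : nat) (x : int) : nat :=
  match x with
  | Posz n => ppart_nat m n
  | Negz _ => 0
  end.

Definition Pnum (m k : nat) : nat := (k * (m * k - (m - 2))) %/ 2.
Definition Qnum (m k : nat) : nat := (k * (m * k + (m - 2))) %/ 2.

Local Open Scope ring_scope.
Definition term (m n k : nat) : int :=
  (-1) ^+ k.+1 *
  ((Pnum m k)%:Z * (ppart m (n%:Z - (Pnum m k)%:Z))%:Z
   + (Qnum m k)%:Z * (ppart m (n%:Z - (Qnum m k)%:Z))%:Z).

From mathcomp Require Import all_boot all_order all_algebra.
From mathcomp Require Import zify ring.
Set Implicit Arguments.
Unset Strict Implicit.
Unset Printing Implicit Defensive.
Import Order.TTheory GRing.Theory Num.Theory.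

(* Let F be the product of the (1 - q^i) over the parts i = 0, 1 or -1 (mod m),
   so that 1/F = sum_n p'_m(n) q^n.  Logarithmic differentiation gives
   sum_n sigma'_m(n) q^n = - q F' / F.  These parts are the m(k+1), mk+1 and
   mk+m-1, so the Jacobi triple product in base q^m turns F into
   theta = sum_k (-1)^k (q^P_k + q^Q_k) - 1, and the coefficient of q^n in
   - q theta' / F is the right-hand side of the formula.  All series are handled
   as polynomials compared below a given degree ([eqmodX]); the finite form of
   the triple product needed here comes from the q-binomial theorem applied to
   prod_(t < 2N) (q^(mN-1) - q^(mt)). *)

Lemma double_bin2 k : ('C(k, 2)).*2 = k * k.-1.
Proof. by elim: k => [|[|k] IH] //; rewrite binS bin1 doubleD IH /=; lia. Qed.

Lemma bin2D a b : 'C(a + b, 2) = 'C(a, 2) + a * b + 'C(b, 2).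
Proof.
apply: double_inj; rewrite !doubleD !double_bin2.
by case: a => [|a]; case: b => [|b] /=; lia.
Qed.

Lemma PnumE m k : 1 < m -> Pnum m k = m * 'C(k, 2) + k.
Proof.
move=> m_gt1; rewrite /Pnum -[RHS](mulnK _ (isT : 0 < 2)); congr (_ %/ 2).
have := double_bin2 k; case: k => [|k] /=; rewrite -?mul2n; nia.
Qed.

Lemma QnumE m k : 1 < m -> Qnum m k = m * 'C(k, 2) + (m - 1) * k.
Proof.
move=> m_gt1; rewrite /Qnum -[RHS](mulnK _ (isT : 0 < 2)); congr (_ %/ 2).
have := double_bin2 k; case: k => [|k] /=; rewrite -?mul2n; nia.
Qed.

Lemma jacobi_expP m N k : 0 < m -> k <= N ->
  m * 'C(N + k, 2) + (m * N - 1) * (N - k) =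
  N * (m * N - 1) + m * 'C(N, 2) + (m * 'C(k, 2) + k).
Proof.
move=> m_gt0 le_kN; have [d ->] : exists d, N = d + k by exists (N - k); rewrite subnK.
rewrite addnK !bin2D; case: d k le_kN => [|d] [|k] _ //=; nia.
Qed.

Lemma jacobi_expQ m N j : 0 < m -> j < N ->
  m * 'C(N - j.+1, 2) + (m * N - 1) * (N + j.+1) =
  N * (m * N - 1) + m * 'C(N, 2) + (m * 'C(j.+1, 2) + (m - 1) * j.+1).
Proof.
move=> m_gt0 lt_jN; have [a ->] : exists a, N = a + j.+1 by exists (N - j.+1); rewrite subnK.
rewrite addnK bin2D; have := double_bin2 j.+1; rewrite -mul2n /=; nia.
Qed.

Definition arith_prog (m c s n : nat) : seq nat := [seq m * u + c | u <- iota s n].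

Lemma mem_arith_prog m c s n a : c < m ->
  (a \in arith_prog m c s n) = (a %% m == c) && (s <= a %/ m < s + n).
Proof.
move=> ltcm; apply/mapP/andP => [[u]|[/eqP amod]].
  rewrite mem_iota => u_in ->; rewrite mulnC modnMDl divnMDl ?(leq_trans _ ltcm) //.
  by rewrite modn_small ?divn_small ?addn0.
by move=> a_div; exists (a %/ m); rewrite ?mem_iota // {1}(divn_eq a m) amod mulnC.
Qed.

Lemma uniq_arith_prog m c s n : 0 < m -> uniq (arith_prog m c s n).
Proof.
move=> m_gt0; rewrite map_inj_uniq ?iota_uniq // => u v /eqP.
by rewrite eqn_add2r eqn_mul2l gtn_eqF //= => /eqP.
Qed.

Definition good_part (m i : nat) : bool := (0 < i) && good_res m i.

Definition good_parts (m N : nat) : seq nat :=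
  arith_prog m 0 1 (N + N) ++ arith_prog m 1 0 N ++ arith_prog m m.-1 0 N.

Section GoodParts.
Variables (m N : nat).
Hypothesis m_gt2 : 2 < m.
Let m_gt0 : 0 < m. Proof. exact: ltn_trans m_gt2. Qed.

Lemma mem_good_parts a : a < N -> (a \in good_parts m N) = good_part m a.
Proof.
move=> ltaN; rewrite !mem_cat !mem_arith_prog ?prednK //; last by lia.
rewrite /good_part /good_res; have le_div : a %/ m <= a := leq_div a m.
have [amod0|amod_neq0] := eqVneq (a %% m) 0.
  have a_pos : (0 < a) = (0 < a %/ m).
    by rewrite {1}(divn_eq a m) amod0 addn0 muln_gt0 m_gt0 andbT.
  rewrite amod0 a_pos /=; lia.
have a_pos : 0 < a by move: amod_neq0 (leq_mod a m); lia.
by rewrite a_pos add0n (leq_ltn_trans le_div ltaN) !andbT.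
Qed.

Lemma uniq_good_parts : uniq (good_parts m N).
Proof.
rewrite /good_parts !cat_uniq !uniq_arith_prog //= !andbT.
apply/andP; split; apply/hasPn => a; rewrite ?mem_cat !mem_arith_prog ?prednK //;
  move: (a %% m) => r; lia.
Qed.

End GoodParts.

Lemma sigmapE m t K : 0 < t <= K ->
  sigmap m t = \sum_(i < K.+1 | good_part m i && (i %| t)) i.
Proof.
case/andP=> t_gt0 le_tK; rewrite /sigmap -(big_mkord (fun i => good_part m i && (i %| t)) id).
rewrite /index_iota subn0.
rewrite [RHS](eq_bigl (fun i => (0 < i) && (i %| t) && good_res m i)); last first.
  by move=> i; rewrite /good_part andbAC.
rewrite -big_filter_cond; apply/esym/perm_big/uniq_perm; rewrite ?filter_uniq ?iota_uniq //.
  exact: divisors_uniq.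
move=> d; rewrite mem_filter mem_iota -dvdn_divisors //=.
have [d_dvd|] := boolP (d %| t); rewrite ?andbF //= andbT.
by have := dvdn_leq t_gt0 d_dvd; case: d d_dvd => [|d]; rewrite ?dvd0n; lia.
Qed.

Local Open Scope ring_scope.

Section TruncatedEquality.
Variable R : nzRingType.
Implicit Types (p q r : {poly R}) (K : nat).

Definition eqmodX K p q : bool := [forall i : 'I_K, p`_i == q`_i].

Lemma eqmodXP K p q : reflect (forall i, (i < K)%N -> p`_i = q`_i) (eqmodX K p q).
Proof.
apply: (iffP forallP) => [h i lt_iK | h i]; first exact/eqP/(h (Ordinal lt_iK)).
exact/eqP/h.
Qed.

Lemma eqmodX_refl K p : eqmodX K p p.
Proof. exact/eqmodXP. Qed.

Lemma eqmodX_sym K p q : eqmodX K p q -> eqmodX K q p.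
Proof. by move/eqmodXP=> h; apply/eqmodXP => i lt_iK; rewrite h. Qed.

Lemma eqmodX_trans K q p r : eqmodX K p q -> eqmodX K q r -> eqmodX K p r.
Proof. by move=> /eqmodXP h1 /eqmodXP h2; apply/eqmodXP => i lt_iK; rewrite h1 ?h2. Qed.

Lemma eqmodX_leq K' K p q : (K' <= K)%N -> eqmodX K p q -> eqmodX K' p q.
Proof.
by move=> le_K'K /eqmodXP h; apply/eqmodXP => i lt_iK'; apply/h/(leq_trans lt_iK').
Qed.

Lemma eqmodXD K p q p' q' :
  eqmodX K p q -> eqmodX K p' q' -> eqmodX K (p + p') (q + q').
Proof.
by move=> /eqmodXP h1 /eqmodXP h2; apply/eqmodXP => i lt_iK; rewrite !coefD h1 ?h2.
Qed.

Lemma eqmodXM K p q p' q' :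
  eqmodX K p q -> eqmodX K p' q' -> eqmodX K (p * p') (q * q').
Proof.
move=> /eqmodXP h1 /eqmodXP h2; apply/eqmodXP => i lt_iK; rewrite !coefM.
apply: eq_bigr => j _; rewrite h1 ?h2 //; apply: leq_ltn_trans lt_iK.
  exact: leq_subr.
by rewrite -ltnS.
Qed.

Lemma eqmodX_sum K (I : Type) (r : seq I) (P : pred I) (F G : I -> {poly R}) :
  (forall i, P i -> eqmodX K (F i) (G i)) ->
  eqmodX K (\sum_(i <- r | P i) F i) (\sum_(i <- r | P i) G i).
Proof. by move=> h; apply: (big_ind2 (eqmodX K)) => //; [apply: eqmodX_refl | apply: eqmodXD]. Qed.

Lemma eqmodX_prod K (I : Type) (r : seq I) (P : pred I) (F G : I -> {poly R}) :
  (forall i, P i -> eqmodX K (F i) (G i)) ->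
  eqmodX K (\prod_(i <- r | P i) F i) (\prod_(i <- r | P i) G i).
Proof. by move=> h; apply: (big_ind2 (eqmodX K)) => //; [apply: eqmodX_refl | apply: eqmodXM]. Qed.

Lemma eqmodX_prod1 K (I : Type) (r : seq I) (P : pred I) (F : I -> {poly R}) :
  (forall i, P i -> eqmodX K (F i) 1) -> eqmodX K (\prod_(i <- r | P i) F i) 1.
Proof.
move=> h; apply: (eqmodX_trans (q := \prod_(i <- r | P i) 1)); last by rewrite big1 ?eqmodX_refl.
exact: eqmodX_prod.
Qed.

Lemma eqmodX_XnM K e p q : eqmodX K p q -> eqmodX (e + K) ('X^e * p) ('X^e * q).
Proof.
move/eqmodXP=> h; apply/eqmodXP => i lt_i; rewrite !coefXnM.
by case: ltnP => // le_ei; apply: h; lia.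
Qed.

Lemma eqmodX_1subXn K a : (K <= a)%N -> eqmodX K (1 - 'X^a) 1.
Proof.
move=> le_Ka; apply/eqmodXP => i lt_iK; rewrite coefB coefXn coefC.
by rewrite (ltn_eqF (leq_trans lt_iK le_Ka)) subr0.
Qed.

Lemma coefX_deriv p i : ('X * p^`())`_i = p`_i *+ i.
Proof. by rewrite coefXM; case: i => [|i] //=; rewrite coef_deriv. Qed.

Lemma eqmodX_X_deriv K p q : eqmodX K p q -> eqmodX K ('X * p^`()) ('X * q^`()).
Proof. by move/eqmodXP=> h; apply/eqmodXP => i lt_iK; rewrite !coefX_deriv h. Qed.

End TruncatedEquality.

Section CommutativeTruncatedEquality.
Variable R : comNzRingType.
Implicit Types (K : nat).

Lemma eqmodX_prodM1 K (I : Type) (r : seq I) (f g : I -> {poly R}) :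
  (forall i, eqmodX K (f i * g i) 1) ->
  eqmodX K ((\prod_(i <- r) f i) * \prod_(i <- r) g i) 1.
Proof. by move=> h; rewrite -big_split; apply: eqmodX_prod1 => i _; apply: h. Qed.

Lemma eqmodX_log_deriv K (I : Type) (r : seq I) (f g w : I -> {poly R}) :
  (forall i, eqmodX K (f i * g i) 1) ->
  (forall i, eqmodX K ('X * (f i)^`() * g i) (w i)) ->
  eqmodX K ('X * (\prod_(i <- r) f i)^`() * \prod_(i <- r) g i) (\sum_(i <- r) w i).
Proof.
move=> fg1 fgw; elim: r => [|a r IH].
  by rewrite !big_nil -polyC1 derivC mulr0 mul0r eqmodX_refl.
rewrite !big_cons derivM.
have -> : 'X * ((f a)^`() * \prod_(j <- r) f j + f a * (\prod_(j <- r) f j)^`()) *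
    (g a * \prod_(j <- r) g j) =
  ('X * (f a)^`() * g a) * ((\prod_(j <- r) f j) * \prod_(j <- r) g j)
  + (f a * g a) * ('X * (\prod_(j <- r) f j)^`() * \prod_(j <- r) g j) by ring.
rewrite -[w a]mulr1 -[X in eqmodX _ _ (_ + X)]mul1r.
by apply: eqmodXD; apply: eqmodXM => //; apply: eqmodX_prodM1.
Qed.

Lemma eqmodX_perm_prod (s t : seq nat) K : uniq s -> uniq t ->
  (forall a, (a < K)%N -> (a \in s) = (a \in t)) ->
  eqmodX K (\prod_(a <- s) (1 - 'X^a) : {poly R}) (\prod_(a <- t) (1 - 'X^a)).
Proof.
move=> us ut st; rewrite (bigID (fun a => a < K)%N) [X in eqmodX _ _ X](bigID (fun a => a < K)%N) /=.
have low_eq : perm_eq [seq a <- s | (a < K)%N] [seq a <- t | (a < K)%N].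
  apply: uniq_perm; rewrite ?filter_uniq // => a; rewrite !mem_filter.
  by case: ltnP => // /st.
rewrite -big_filter -[X in eqmodX _ _ (X * _)]big_filter (perm_big _ low_eq).
apply: eqmodXM; first exact: eqmodX_refl.
apply: (eqmodX_trans (q := 1)); last apply: eqmodX_sym;
  by apply: eqmodX_prod1 => a; rewrite -leqNgt; apply: eqmodX_1subXn.
Qed.

End CommutativeTruncatedEquality.

Section GaussianBinomial.
Variables (R : comNzRingType) (q : R).

Fixpoint qbinom (n i : nat) : R :=
  match n with
  | 0 => (i == 0)%:R
  | n'.+1 => (if i is i'.+1 then qbinom n' i' else 0) + q ^+ i * qbinom n' i
  end.

Lemma qbinom_gt n i : (n < i)%N -> qbinom n i = 0.
Proof. by elim: n i => [|n IH] [|i] //= hi; rewrite !IH ?mulr0 ?addr0 // ltnW. Qed.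

Lemma qbinomn0 n : qbinom n 0 = 1.
Proof. by elim: n => [|n IH] //=; rewrite add0r expr0 mul1r. Qed.

Lemma qbinomial_theorem x y n :
  \prod_(t < n) (x + y * q ^+ t) =
  \sum_(i < n.+1) qbinom n i * q ^+ 'C(i, 2) * y ^+ i * x ^+ (n - i).
Proof.
elim: n y => [|n IH] y; first by rewrite big_ord0 big_ord1 /= !expr0 !mulr1.
rewrite big_ord_recl expr0 mulr1.
under eq_bigr do rewrite lift0 exprS mulrA.
rewrite IH mulrDl.
rewrite [in RHS](eq_bigr (fun i : 'I_n.+2 =>
   (if (i : nat) is i'.+1 then qbinom n i' else 0) * q ^+ 'C(i, 2) * y ^+ i * x ^+ (n.+1 - i)
   + q ^+ i * qbinom n i * q ^+ 'C(i, 2) * y ^+ i * x ^+ (n.+1 - i))); last first.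
  by move=> i _ /=; rewrite !mulrDl.
rewrite big_split /= addrC; congr (_ + _).
  rewrite [RHS]big_ord_recr /= qbinom_gt // mulr0 !mul0r addr0 mulr_sumr.
  apply: eq_bigr => i _; rewrite subSn ?exprS ?exprMn; last by rewrite -ltnS.
  ring.
rewrite [RHS]big_ord_recl /= !mul0r add0r mulr_sumr.
apply: eq_bigr => i _; rewrite /= binS bin1 exprD subSS exprS exprMn; ring.
Qed.

Lemma qbinom_qfactorial n i :
  qbinom n i * \prod_(j < i) (1 - q ^+ j.+1) = \prod_(j < i) (1 - q ^+ (n - j)).
Proof.
elim: n i => [|n IH] [|i]; rewrite ?big_ord0 ?mulr1 ?qbinomn0 //.
  by rewrite /= mul0r big_ord_recl subn0 expr0 subrr mul0r.
rewrite /= mulrDl -mulrA IH {1}big_ord_recr /= mulrA IH [RHS]big_ord_recl subn0.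
rewrite big_ord_recr /=; case: (leqP i n) => [le_in|lt_ni].
  have -> : q ^+ n.+1 = q ^+ i.+1 * q ^+ (n - i) by rewrite -exprD; congr (_ ^+ _); lia.
  ring.
have -> : \prod_(j < i) (1 - q ^+ (n - j)) = 0.
  by rewrite (bigD1 (Ordinal lt_ni)) //= subnn expr0 subrr mul0r.
by rewrite !(mul0r, mulr0, addr0).
Qed.

End GaussianBinomial.

Definition jacobi_prod (m N : nat) : {poly int} :=
  \prod_(u < N) ((1 - 'X^(m * u + 1)) * (1 - 'X^(m * u + m.-1))).

Definition jacobi_sum (m N : nat) : {poly int} :=
  \sum_(k < N.+1) (-1) ^+ k * 'X^(Pnum m k) * qbinom 'X^m (N + N) (N + k)
  + \sum_(j < N) (-1) ^+ j.+1 * 'X^(Qnum m j.+1) * qbinom 'X^m (N + N) (N - j.+1).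

Section FiniteJacobi.
Variables (m N : nat).
Hypothesis m_gt2 : (2 < m)%N.
Let m_gt1 : (1 < m)%N. Proof. exact: ltnW. Qed.
Let m_gt0 : (0 < m)%N. Proof. exact: ltnW. Qed.

Let c : {poly int} := (-1) ^+ N * 'X^(N * (m * N - 1) + m * 'C(N, 2)).

(* Pull [X^(mN-1)] out of the factors with [t >= N] and [- X^(mt)] out of the
   others. *)
Lemma jacobi_prodE :
  \prod_(t < N + N) ('X^(m * N - 1) + (-1) * 'X^m ^+ t) = c * jacobi_prod m N.
Proof.
rewrite big_split_ord /= (reindex_inj rev_ord_inj) /=.
rewrite (eq_bigr (fun u : 'I_N => -1 * 'X^(m * (N - u.+1)) * (1 - 'X^(m * u + m.-1))));
  last first.
  move=> u _; have := ltn_ord u => lt_uN.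
  have -> : (m * N - 1 = m * (N - u.+1) + (m * u + m.-1))%N by nia.
  by rewrite exprD -exprM; ring.
rewrite [X in _ * X](eq_bigr (fun u : 'I_N => 'X^(m * N - 1) * (1 - 'X^(m * u + 1))));
  last first.
  move=> u _; have := ltn_ord u => lt_uN; rewrite -exprM /=.
  have -> : (m * (N + u) = (m * N - 1) + (m * u + 1))%N by nia.
  by rewrite exprD; ring.
have sum_exp : (\sum_(u < N) m * (N - u.+1) = m * 'C(N, 2))%N.
  rewrite -big_distrr -bin2_sum big_mkord (reindex_inj rev_ord_inj) /=.
  by congr (_ * _)%N; apply: eq_bigr => u _; have := ltn_ord u; lia.
rewrite !big_split /= prodrXr !prodr_const !card_ord -exprM sum_exp.
by rewrite /c /jacobi_prod big_split /= exprD [(_ * N)%N]mulnC; ring.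
Qed.

Lemma jacobi_sumE :
  \sum_(i < (N + N).+1)
      qbinom 'X^m (N + N) i * 'X^m ^+ 'C(i, 2) * (-1) ^+ i * 'X^(m * N - 1) ^+ (N + N - i)
  = c * jacobi_sum m N.
Proof.
rewrite -addnS big_split_ord /= /jacobi_sum mulrDr addrC; congr (_ + _).
  rewrite mulr_sumr; apply: eq_bigr => k _; have := ltn_ord k; rewrite ltnS => le_kN.
  have -> : (N + N - (N + k) = N - k)%N by lia.
  transitivity (qbinom ('X^m : {poly int}) (N + N) (N + k) * (-1) ^+ N * (-1) ^+ k *
    'X^(m * 'C(N + k, 2) + (m * N - 1) * (N - k))); first by rewrite -!exprM !exprD; ring.
  by rewrite jacobi_expP // exprD /c PnumE //; ring.
rewrite mulr_sumr (reindex_inj rev_ord_inj) /=; apply: eq_bigr => j _.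
have lt_jN := ltn_ord j.
have -> : (N + N - (N - j.+1) = N + j.+1)%N by lia.
have -> : (-1) ^+ (N - j.+1) = (-1) ^+ N * (-1) ^+ j.+1 :> {poly int}.
  by rewrite -signr_odd oddB // signr_addb !signr_odd.
transitivity (qbinom ('X^m : {poly int}) (N + N) (N - j.+1) * (-1) ^+ N * (-1) ^+ j.+1 *
  'X^(m * 'C(N - j.+1, 2) + (m * N - 1) * (N + j.+1))); first by rewrite -!exprM [in RHS]exprD; ring.
by rewrite jacobi_expQ // exprD /c QnumE //; ring.
Qed.

Lemma finite_jacobi : jacobi_prod m N = jacobi_sum m N.
Proof.
have c_neq0 : c != 0 by rewrite mulf_neq0 ?signr_eq0 // expf_neq0 // polyX_eq0.
apply: (mulfI c_neq0); rewrite -jacobi_prodE -jacobi_sumE.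
exact: qbinomial_theorem.
Qed.

End FiniteJacobi.

Definition qpoch (m n : nat) : {poly int} := \prod_(j < n) (1 - 'X^m ^+ j.+1).

(* [P_0 = Q_0 = 0], so the [k = 0] term is [2]: hence the [- 1]. *)
Definition theta (m N : nat) : {poly int} :=
  \sum_(k < N.+1) (-1) ^+ k * ('X^(Pnum m k) + 'X^(Qnum m k)) - 1.

Lemma qbinomM_qpoch m n i : (0 < m)%N -> (i <= n)%N ->
  eqmodX (minn i (n - i)).+1 (qbinom 'X^m n i * qpoch m n) 1.
Proof.
move=> m_gt0 le_in.
rewrite /qpoch -(big_mkord xpredT (fun j => 1 - 'X^m ^+ j.+1)) (big_cat_nat (leq0n i) le_in).
rewrite big_mkord /= mulrA qbinom_qfactorial.
rewrite [X in _ * X](_ : _ = \prod_(j < n - i) (1 - 'X^m ^+ (j + i).+1)); last first.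
  by rewrite -{1}(add0n i) big_addn big_mkord.
rewrite -[X in eqmodX _ _ X]mulr1; apply: eqmodXM; apply: eqmodX_prod1 => j _;
  rewrite -exprM; apply: eqmodX_1subXn; have := ltn_ord j; nia.
Qed.

Lemma qpochM_sign_Xn_qbinom m n i e s K : (0 < m)%N -> (i <= n)%N ->
  (K <= e + (minn i (n - i)).+1)%N ->
  eqmodX K (qpoch m n * ((-1) ^+ s * 'X^e * qbinom 'X^m n i)) ((-1) ^+ s * 'X^e).
Proof.
move=> m_gt0 le_in leK.
rewrite mulrC -!mulrA -[X in eqmodX _ _ X]mulr1 -mulrA.
apply: eqmodXM; first exact: eqmodX_refl.
exact: eqmodX_leq leK (eqmodX_XnM e (qbinomM_qpoch m_gt0 le_in)).
Qed.

Lemma thetaE m N : theta m N =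
  \sum_(k < N.+1) (-1) ^+ k * 'X^(Pnum m k) + \sum_(j < N) (-1) ^+ j.+1 * 'X^(Qnum m j.+1).
Proof.
rewrite /theta (eq_bigr (fun k : 'I_N.+1 => (-1) ^+ k * 'X^(Pnum m k) + (-1) ^+ k * 'X^(Qnum m k)));
  last by move=> k _; rewrite mulrDr.
rewrite big_split /= [\sum_(k < N.+1) _ * 'X^(Qnum m k)]big_ord_recl.
have -> : Qnum m 0 = 0%N by [].
rewrite expr0 mul1r /=; ring.
Qed.

Lemma qpoch_jacobi_theta m N : (2 < m)%N ->
  eqmodX N.+1 (qpoch m (N + N) * jacobi_prod m N) (theta m N).
Proof.
move=> m_gt2; have m_gt1 : (1 < m)%N := ltnW m_gt2.
rewrite finite_jacobi // thetaE /jacobi_sum mulrDr.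
apply: eqmodXD; rewrite mulr_sumr; apply: eqmodX_sum => k _;
  apply: qpochM_sign_Xn_qbinom; rewrite ?(PnumE, QnumE) //; have := ltn_ord k; nia.
Qed.

Lemma good_parts_prod m N :
  qpoch m (N + N) * jacobi_prod m N = \prod_(a <- good_parts m N) (1 - 'X^a).
Proof.
have iota0 n : iota 0 n = index_iota 0 n by rewrite /index_iota subn0.
rewrite /good_parts /arith_prog [iota 1 _](iotaDl 1 0) !big_cat !big_map !iota0.
rewrite !big_mkord /qpoch /jacobi_prod big_split /=.
by congr (_ * _); apply: eq_bigr => j _; rewrite addn0 add1n exprM.
Qed.

Definition euler_prod (m K : nat) : {poly int} :=
  \prod_(i < K.+1 | good_part m i) (1 - 'X^i).

Lemma euler_prod_seq m K :
  euler_prod m K = \prod_(a <- [seq i <- iota 0 K.+1 | good_part m i]) (1 - 'X^a).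
Proof.
by rewrite big_filter /euler_prod -(big_mkord (good_part m) (fun i => 1 - 'X^i)) /index_iota subn0.
Qed.

Lemma euler_prod_theta m K N : (2 < m)%N -> (K < N)%N ->
  eqmodX K.+1 (euler_prod m K) (theta m N).
Proof.
move=> m_gt2 ltKN; apply: (eqmodX_trans (q := qpoch m (N + N) * jacobi_prod m N)).
  rewrite euler_prod_seq good_parts_prod //.
  apply: eqmodX_perm_prod; rewrite ?filter_uniq ?iota_uniq ?uniq_good_parts // => a lt_aK.
  rewrite mem_filter mem_iota leq0n add0n lt_aK !andbT mem_good_parts //.
  exact: leq_trans lt_aK _.
by apply: eqmodX_leq (qpoch_jacobi_theta N m_gt2); rewrite ltnS ltnW.
Qed.

Lemma eqmodX_euler_prod m K K' y : (y <= K)%N -> (y <= K')%N ->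
  eqmodX y.+1 (euler_prod m K) (euler_prod m K').
Proof.
move=> le_yK le_yK'; rewrite !euler_prod_seq.
apply: eqmodX_perm_prod; rewrite ?filter_uniq ?iota_uniq // => a lt_ay.
by rewrite !mem_filter !mem_iota /= !(leq_trans lt_ay).
Qed.

Section GeneratingFunctions.
Variables (m K : nat).
Implicit Types (i : 'I_K.+1).

Definition part_factor i : {poly int} :=
  if good_part m i then \sum_(j < K.+1) 'X^(i * j) else 1.

Definition partgf : {poly int} := \prod_(i < K.+1) part_factor i.

Lemma part_factorE i :
  part_factor i = \sum_(j < K.+1) (if good_part m i then 'X^(i * j) else (j == ord0)%:R).
Proof. by rewrite /part_factor; case: ifP => // _; rewrite big_ord_recl big1 ?addr0. Qed.

Lemma coef_part_monomial (f : {ffun 'I_K.+1 -> 'I_K.+1}) :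
  (\prod_(i < K.+1) (if good_part m i then 'X^(i * f i) else (f i == ord0)%:R) : {poly int})`_K
  = (good_partition m f)%:R.
Proof.
rewrite /good_partition.
have [/forallP good_f|] := boolP [forall i, (f i != ord0) ==> good_part m i]; last first.
  rewrite negb_forall => /existsP[i]; rewrite negb_imply => /andP[fi_neq0 /negbTE bad_i].
  by rewrite (bigD1 i) //= bad_i (negbTE fi_neq0) mul0r coef0.
rewrite (eq_bigr (fun i => 'X^(i * f i))) ?prodrXr ?coefXn ?(eq_sym K) //.
move=> i _; case: ifP => // bad_i; move: (good_f i).
by rewrite bad_i implybF negbK => /eqP ->; rewrite muln0.
Qed.

Lemma coef_partgf_top : partgf`_K = (ppart_nat m K)%:R.
Proof.
rewrite /partgf (eq_bigr _ (fun i _ => part_factorE i)) bigA_distr_bigA coef_sum.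
rewrite (eq_bigr _ (fun f _ => coef_part_monomial f)) /ppart_nat -sum1_card natr_sum.
by rewrite [RHS]big_mkcond; apply: eq_bigr => f _; rewrite inE; case: good_partition.
Qed.

Definition euler_factor i : {poly int} := if good_part m i then 1 - 'X^i else 1.

Definition divisor_series i : {poly int} :=
  if good_part m i then (\sum_(j < K.+1) 'X^(i * j.+1)) *+ i else 0.

Definition sigmagf : {poly int} := \sum_(i < K.+1) divisor_series i.

Lemma euler_prodE : euler_prod m K = \prod_(i < K.+1) euler_factor i.
Proof. exact: big_mkcond. Qed.

Lemma euler_part_factor i : eqmodX K.+1 (euler_factor i * part_factor i) 1.
Proof.
rewrite /euler_factor /part_factor.
case: ifP => [/andP[i_gt0 _]|_]; last by rewrite mulr1 eqmodX_refl.
under eq_bigr do rewrite exprM.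
rewrite -opprB mulNr -subrX1 opprB -exprM; apply: eqmodX_1subXn; nia.
Qed.

Lemma euler_part_factor_deriv i :
  'X * (euler_factor i)^`() * part_factor i = - divisor_series i.
Proof.
rewrite /euler_factor /part_factor /divisor_series.
case: ifP => [/andP[i_gt0 _]|_]; last by rewrite derivC mulr0 mul0r oppr0.
rewrite derivB derivC sub0r derivXn mulrN mulNr mulrnAr -exprS prednK // mulrnAl.
by rewrite mulr_sumr; congr (- (_ *+ _)); apply: eq_bigr => j _; rewrite -exprD mulnS.
Qed.

Lemma partgf_euler_prod : eqmodX K.+1 (partgf * euler_prod m K) 1.
Proof.
rewrite euler_prodE mulrC -big_split.
by apply: eqmodX_prod1 => i _; apply: euler_part_factor.
Qed.

Lemma euler_prod_log_deriv :
  eqmodX K.+1 ('X * (euler_prod m K)^`() * partgf) (- sigmagf).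
Proof.
rewrite euler_prodE /sigmagf -sumrN; apply: eqmodX_log_deriv => i.
  exact: euler_part_factor.
by rewrite euler_part_factor_deriv; apply: eqmodX_refl.
Qed.

End GeneratingFunctions.

Lemma partgf_eqmodX m K y : (y <= K)%N -> eqmodX y.+1 (partgf m y) (partgf m K).
Proof.
move=> le_yK.
have inv_K : eqmodX y.+1 (partgf m K * euler_prod m K) 1.
  by apply: eqmodX_leq (partgf_euler_prod m K).
have same_euler := eqmodX_euler_prod m (leqnn y) le_yK.
apply: (eqmodX_trans (q := partgf m y * (euler_prod m y * partgf m K))).
  rewrite -[X in eqmodX _ X _]mulr1; apply: eqmodXM; first exact: eqmodX_refl.
  apply: eqmodX_sym; rewrite mulrC; apply: eqmodX_trans _ inv_K.
  exact: eqmodXM (eqmodX_refl _ _) same_euler.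
rewrite mulrA -[X in eqmodX _ _ X]mul1r.
exact: eqmodXM (partgf_euler_prod m y) (eqmodX_refl _ _).
Qed.

Lemma coef_partgf m K y : (y <= K)%N -> (partgf m K)`_y = (ppart_nat m y)%:R.
Proof. by move=> le_yK; rewrite -(eqmodXP _ _ _ (partgf_eqmodX m le_yK)) ?coef_partgf_top. Qed.

Lemma coef_sum_Xn_multiples i K t : (0 < i)%N -> (0 < t <= K)%N ->
  (\sum_(j < K.+1) 'X^(i * j.+1) : {poly int})`_t = (i %| t)%N%:R.
Proof.
move=> i_gt0 /andP[t_gt0 le_tK]; rewrite coef_sum.
under eq_bigr do rewrite coefXn.
have [/dvdnP[c def_t]|ndvd_it] := boolP (i %| t)%N; last first.
  by rewrite big1 // => j _; case: eqP => // def_t; case/negP: ndvd_it; rewrite def_t dvdn_mulr.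
have c_gt0 : (0 < c)%N by move: t_gt0; rewrite def_t muln_gt0 => /andP[].
have lt_cK : (c.-1 < K.+1)%N by move: le_tK; rewrite def_t; nia.
rewrite (bigD1 (Ordinal lt_cK)) //= prednK // def_t mulnC eqxx big1 ?addr0 // => j ne_jc.
rewrite eqn_pmul2l // eq_sym; case: eqP => // def_c; case/eqP: ne_jc.
by apply: val_inj; rewrite /= -def_c.
Qed.

Lemma coef_sigmagf m K t : (0 < t <= K)%N -> (sigmagf m K)`_t = (sigmap m t)%:R.
Proof.
move=> t_range; rewrite /sigmagf coef_sum (sigmapE m t_range) natr_sum [RHS]big_mkcond /=.
apply: eq_bigr => i _; rewrite /divisor_series; case: ifP => [/andP[i_gt0 _]|_] /=.
  by rewrite coefMn coef_sum_Xn_multiples //; case: (i %| t)%N; rewrite ?mul0rn.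
by rewrite coef0.
Qed.

Lemma sign_polyC (R : nzRingType) k : (-1) ^+ k = ((-1) ^+ k)%:P :> {poly R}.
Proof. by rewrite rmorph_sign. Qed.

Lemma X_derivXn (R : nzRingType) e : 'X * ('X^e)^`() = 'X^e *+ e :> {poly R}.
Proof. by case: e => [|e]; rewrite derivXn ?mulr0n ?mulr0 // mulrnAr -exprS. Qed.

Lemma X_deriv_theta m N : 'X * (theta m N)^`() =
  \sum_(k < N.+1) (-1) ^+ k * ('X^(Pnum m k) *+ Pnum m k + 'X^(Qnum m k) *+ Qnum m k).
Proof.
rewrite /theta derivB -polyC1 derivC subr0 raddf_sum mulr_sumr; apply: eq_bigr => k _.
by rewrite /= sign_polyC deriv_mulC mulrCA derivD mulrDr !X_derivXn.
Qed.

Lemma ppart_neg m (z : int) : z < 0 -> ppart m z = 0%N.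
Proof. by case: z. Qed.

Lemma coef_Xn_partgf m n e :
  ('X^e * partgf m n)`_n = (ppart m (n%:Z - e%:Z))%:R.
Proof.
rewrite coefXnM; case: ltnP => [lt_ne|le_en].
  by rewrite ppart_neg // subr_lt0 ltz_nat.
by rewrite subzn // coef_partgf // leq_subr.
Qed.

Lemma term_eq0 m n k : (1 < m)%N -> (n < k)%N -> term m n k = 0.
Proof.
move=> m_gt1 lt_nk; rewrite /term !ppart_neg ?mulr0 ?addr0 // subr_lt0 ltz_nat.
  by rewrite QnumE //; nia.
by rewrite PnumE //; nia.
Qed.

Lemma sigmap_sum_term m n N : (2 < m)%N -> (0 < n)%N -> (n < N)%N ->
  (sigmap m n)%:Z = \sum_(k < N.+1) term m n k.
Proof.
move=> m_gt2 n_gt0 lt_nN.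
have key : eqmodX n.+1 (- sigmagf m n) ('X * (theta m N)^`() * partgf m n).
  apply: eqmodX_trans (eqmodX_sym (euler_prod_log_deriv m n)) _.
  exact: eqmodXM (eqmodX_X_deriv (euler_prod_theta m_gt2 lt_nN)) (eqmodX_refl _ _).
have n_range : (0 < n <= n)%N by rewrite n_gt0 leqnn.
move/eqmodXP/(_ n (ltnSn n)): key.
rewrite coefN coef_sigmagf // natz => /eqP; rewrite eqr_oppLR => /eqP ->.
rewrite X_deriv_theta mulr_suml coef_sum -sumrN; apply: eq_bigr => k _.
rewrite -mulrA sign_polyC coefCM mulrDl coefD !mulrnAl !coefMn !coef_Xn_partgf.
by rewrite /term -(natz (Pnum m k)) -(natz (Qnum m k)) !mulr_natl !natz exprS mulN1r mulNr.
Qed.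

Theorem theorem2p8 (m n : nat) (hm : (3 <= m)%N) (hn : (0 < n)%N) :
  (forall N : nat, (n < N)%N ->
     ((sigmap m n)%:Z = \sum_(0 <= k < N) term m n k))
  /\ (forall k : nat, (n < k)%N -> term m n k = 0).
Proof.
have m_gt1 : (1 < m)%N by apply: ltnW.
split=> [N lt_nN|k]; last exact: term_eq0.
by rewrite big_mkord (sigmap_sum_term hm hn lt_nN) big_ord_recr /= term_eq0 ?addr0.
Qed.
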